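(* Let $f(x,y)=(x,y)$ be the identity function. Any protocol with a fixed order of speaking that computes $f$ over a feedback channel succeeds with probability at most $1/2$ when $1/4$ of the transmissions are corrupted; that is, there are inputs and an adversarial corruption pattern corrupting at most a $1/4$-fraction of the transmissions under which the protocol outputs the correct value with probability at most $1/2$.
   Context: Alice holds $x$ and Bob holds $y$; in each round exactly one party sends one symbol over the channel, and both parties must output $f(x,y)$. A feedback channel is a channel $\Sigma\to\Sigma$ (for some alphabet $\Sigma$) in which the adversary may change any transmitted symbol into any other symbol, and the sender learns, via a noiseless feedback, the (possibly corrupted) symbol received by the other party. A protocol has a fixed order of speaking if there is a function $g:\mathbb{N}\to\{\text{Alice},\text{Bob}\}$ such that the speaker at round $i$ is $g(i)$, independent of inputs and noise; the protocol runs a fixed number of rounds. *)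

From mathcomp Require Import all_boot all_order all_algebra.
Set Implicit Arguments. Unset Strict Implicit. Unset Printing Implicit Defensive.
Import Order.TTheory GRing.Theory Num.Theory.

(* Thanks to the noiseless feedback, both
   parties know the sequence of *received* symbols (the transcript); each
   party's message in round i is a function of its input, its private
   randomness and the received transcript of the first i rounds.  The order
   of speaking [speaker] depends only on the round number (true = Alice). *)
Record protocol (X Y S RA RB : Type) := Protocol {
  rounds  : nat;
  speaker : nat -> bool;
  msgA    : X -> RA -> seq S -> S;
  msgB    : Y -> RB -> seq S -> S;
  outA    : X -> RA -> seq S -> X * Y;
  outB    : Y -> RB -> seq S -> X * Y }.

(* An adaptive adversary: given the received transcript so far and the symbol
   actually sent in the current round, it chooses the symbol delivered. *)
Definition adversary (S : Type) := seq S -> S -> S.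

Section Run.
Variables (X Y : Type) (S : eqType) (RA RB : Type).
Variables (P : protocol X Y S RA RB) (adv : adversary S).
Variables (x : X) (y : Y) (rA : RA) (rB : RB).

Definition sent (i : nat) (h : seq S) : S :=
  if speaker P i then msgA P x rA h else msgB P y rB h.

Fixpoint transcript (i : nat) : seq S :=
  if i is i'.+1 then
    let h := transcript i' in rcons h (adv h (sent i' h))
  else [::].

Definition corruptions : nat :=
  \sum_(i < rounds P)
    (adv (transcript i) (sent i (transcript i)) != sent i (transcript i)).

End Run.

Definition succeeds (X Y : eqType) (S : eqType) (RA RB : Type)
  (P : protocol X Y S RA RB) (adv : adversary S)
  (x : X) (y : Y) (rA : RA) (rB : RB) : bool :=
  (outA P x rA (transcript P adv x y rA rB (rounds P)) == (x, y)) &&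
  (outB P y rB (transcript P adv x y rA rB (rounds P)) == (x, y)).

From mathcomp Require Import all_boot all_order all_algebra.
From mathcomp Require Import ring lra zify.
Import Order.TTheory GRing.Theory Num.Theory.
Set Implicit Arguments. Unset Strict Implicit. Unset Printing Implicit Defensive.

(* Suppose Bob speaks in k <= n/2 of the n rounds (otherwise exchange the roles
   of Alice and Bob).  Fix Alice's input x and two inputs y0 != y1 of Bob.  In
   world 0 Bob holds (y0, u) and the adversary replaces Bob's messages after his
   first k/2 ones by those Bob would send holding (y1, v); in world 1 Bob holds
   (y1, v) and the adversary replaces his first k/2 messages by those of
   (y0, u).  Both worlds produce the same transcript, so Alice outputs the same
   pair in both and is right in at most one of them; each world costs at most
   k/2 + 1 <= n/4 + 1 corruptions.  Averaging over u and v, for the best choice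
   of the adversary's simulated randomness one of the two worlds succeeds with
   probability at most 1/2. *)

Local Open Scope ring_scope.

Section TwoWorldAveraging.
Variables (R : realFieldType) (W Q : finType) (w : W -> R) (q : Q -> R).
Hypotheses (w_ge0 : forall a, 0 <= w a) (w_sum : \sum_a w a = 1).
Hypotheses (q_ge0 : forall u, 0 <= q u) (q_sum : \sum_u q u = 1).

Lemma exists_le_expectation (F : Q -> R) : exists v, F v <= \sum_u q u * F u.
Proof.
have [v0 _ | Q0] := pickP (xpredT : pred Q); last first.
  by move: q_sum; rewrite big_pred0 // => /eqP; rewrite eq_sym oner_eq0.
have [v _ minF] := arg_minP F (P := xpredT) (i0 := v0) erefl.
exists v; rewrite -[F v]mul1r -q_sum big_distrl /=.
by apply: ler_sum => u _; exact: ler_wpM2l (q_ge0 u) _ _ (minF u isT).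
Qed.

Lemma expectation_sum2 (G : W -> Q -> Q -> R) :
  \sum_v q v * (\sum_a \sum_u w a * q u * G a u v) =
  \sum_a \sum_u \sum_v w a * q u * q v * G a u v.
Proof.
under eq_bigr => v _ do rewrite big_distrr /=.
rewrite exchange_big; apply: eq_bigr => a _ /=.
under eq_bigr => v _ do rewrite big_distrr /=.
rewrite exchange_big; apply: eq_bigr => u _; apply: eq_bigr => v _ /=; ring.
Qed.

Lemma sum3_weights : \sum_a \sum_u \sum_v w a * q u * q v = 1.
Proof.
under eq_bigr => a _ do under eq_bigr => u _ do rewrite -big_distrr /= q_sum mulr1.
by under eq_bigr => a _ do rewrite -big_distrr /= q_sum mulr1.
Qed.

(* E0 a u v and E1 a v u are the success events of two worlds sharing the
   randomness a of one party, with the roles of u and v exchanged. *)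
Lemma exists_half_of_disjoint (E0 E1 : W -> Q -> Q -> bool)
    (disjE : forall a u v, E0 a u v -> ~~ E1 a v u) :
  exists v, \sum_a \sum_u w a * q u * (E0 a u v)%:R <= 2^-1 \/
            \sum_a \sum_u w a * q u * (E1 a u v)%:R <= 2^-1.
Proof.
set p0 := fun v => \sum_a \sum_u w a * q u * (E0 a u v)%:R.
set p1 := fun v => \sum_a \sum_u w a * q u * (E1 a u v)%:R.
have indicator_le1 a u v : (E0 a u v)%:R + (E1 a v u)%:R <= 1 :> R.
  move: (disjE a u v); rewrite -natrD lern1.
  by case: (E0 a u v); case: (E1 a v u) => // /(_ isT).
have mean_le1 : \sum_v q v * (p0 v + p1 v) <= 1.
  under eq_bigr => v _ do rewrite mulrDr.
  rewrite big_split /= !expectation_sum2 -[X in _ <= X]sum3_weights.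
  rewrite [X in _ + X](eq_bigr _ (fun a _ => exchange_big _ _ _ _ _ _)) /=.
  rewrite -big_split /=; apply: ler_sum => a _.
  rewrite -big_split /=; apply: ler_sum => u _.
  rewrite -big_split /=; apply: ler_sum => v _.
  rewrite [w a * q v * q u]mulrAC -mulrDr -[X in _ <= X]mulr1.
  by apply: ler_wpM2l (indicator_le1 a u v); rewrite ?mulr_ge0.
have [v le_mean] := exists_le_expectation (fun v => p0 v + p1 v).
exists v; case: (lerP (p0 v) 2^-1) => [|p0_gt]; [by left | right].
have := le_trans le_mean mean_le1; rewrite /= -/(p0 v) -/(p1 v); lra.
Qed.

End TwoWorldAveraging.

Local Close Scope ring_scope.

Section ForgedRuns.
Variables (X Y S : eqType) (RA RB : Type) (P : protocol X Y S RA RB).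

Lemma size_transcript adv x y rA rB i : size (transcript P adv x y rA rB i) = i.
Proof. by elim: i => //= i IH; rewrite size_rcons IH. Qed.

Lemma corruptions_le_count (D : pred nat) adv x y rA rB :
  (forall h s, ~~ D (size h) -> adv h s = s) ->
  corruptions P adv x y rA rB <= \sum_(i < rounds P) D i.
Proof.
move=> honest; apply: leq_sum => i _.
case: (boolP (D i)) => [_|notD]; first exact: leq_b1.
by rewrite honest ?size_transcript ?eqxx.
Qed.

Definition bob_rounds i := \sum_(j < i) ~~ speaker P j.

Definition early m i := bob_rounds i < m.

Lemma count_early_bob_rounds m n :
  \sum_(i < n) (~~ speaker P i && early m i) = minn m (bob_rounds n).
Proof.
elim: n => [|n IH]; first by rewrite /bob_rounds !big_ord0 minn0.
rewrite big_ord_recr /= IH /bob_rounds big_ord_recr /= -/(bob_rounds n) /early.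
by case: (speaker P n); case: ltnP => /=; lia.
Qed.

Lemma count_late_bob_rounds m n :
  \sum_(i < n) (~~ speaker P i && ~~ early m i) = bob_rounds n - m.
Proof.
have split_rounds : \sum_(i < n) (~~ speaker P i && early m i) +
    \sum_(i < n) (~~ speaker P i && ~~ early m i) = bob_rounds n.
  rewrite -big_split; apply: eq_bigr => i _.
  by case: (speaker P i); case: (early m i).
by move: split_rounds; rewrite count_early_bob_rounds; lia.
Qed.

Fixpoint hybrid_transcript x rA y0 u y1 v m i : seq S :=
  if i is i'.+1 then
    let h := hybrid_transcript x rA y0 u y1 v m i' in
    rcons h (if speaker P i' then msgA P x rA h
             else if early m i' then msgB P y0 u h else msgB P y1 v h)
  else [::].

Definition forge_late m y1 v : adversary S := fun h s =>
  if ~~ speaker P (size h) && ~~ early m (size h) then msgB P y1 v h else s.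

Definition forge_early m y0 u : adversary S := fun h s =>
  if ~~ speaker P (size h) && early m (size h) then msgB P y0 u h else s.

Lemma size_hybrid_transcript x rA y0 u y1 v m i :
  size (hybrid_transcript x rA y0 u y1 v m i) = i.
Proof. by elim: i => //= i IH; rewrite size_rcons IH. Qed.

Lemma transcript_forge_late x rA y0 u y1 v m i :
  transcript P (forge_late m y1 v) x y0 rA u i =
  hybrid_transcript x rA y0 u y1 v m i.
Proof.
elim: i => //= i ->; rewrite /forge_late /sent size_hybrid_transcript.
by case: (speaker P i); case: (early m i).
Qed.

Lemma transcript_forge_early x rA y0 u y1 v m i :
  transcript P (forge_early m y0 u) x y1 rA v i =
  hybrid_transcript x rA y0 u y1 v m i.
Proof.
elim: i => //= i ->; rewrite /forge_early /sent size_hybrid_transcript.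
by case: (speaker P i); case: (early m i).
Qed.

Lemma forged_runs_disjoint x rA y0 y1 u v m : y0 != y1 ->
  succeeds P (forge_late m y1 v) x y0 rA u ->
  ~~ succeeds P (forge_early m y0 u) x y1 rA v.
Proof.
move=> y01; rewrite /succeeds transcript_forge_late transcript_forge_early.
case/andP => /eqP -> _; apply/negP => /andP[/eqP [y01_eq] _].
by rewrite y01_eq eqxx in y01.
Qed.

Lemma corruptions_forge_late x rA y0 u y1 v m :
  corruptions P (forge_late m y1 v) x y0 rA u <= bob_rounds (rounds P) - m.
Proof.
rewrite -count_late_bob_rounds.
apply: (@corruptions_le_count (fun i => ~~ speaker P i && ~~ early m i)) => h s.
by rewrite /forge_late => /negbTE ->.
Qed.

Lemma corruptions_forge_early x rA y0 u y1 v m :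
  corruptions P (forge_early m y0 u) x y1 rA v <= m.
Proof.
apply: leq_trans (geq_minl m (bob_rounds (rounds P))).
rewrite -count_early_bob_rounds.
apply: (@corruptions_le_count (fun i => ~~ speaker P i && early m i)) => h s.
by rewrite /forge_early => /negbTE ->.
Qed.

End ForgedRuns.

Local Open Scope ring_scope.

Lemma exists_attack_of_bob_rounds_le_half
  (R : realFieldType) (X Y S : eqType) (RA RB : finType)
  (pA : RA -> R) (pB : RB -> R)
  (pA_ge0 : forall r, 0 <= pA r) (pA_sum : \sum_(r : RA) pA r = 1)
  (pB_ge0 : forall r, 0 <= pB r) (pB_sum : \sum_(r : RB) pB r = 1)
  (P : protocol X Y S RA RB) (x0 : X) (y0 y1 : Y) (y01 : y0 != y1)
  (bob_minority : (2 * bob_rounds P (rounds P) <= rounds P)%N) :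
  exists (x : X) (y : Y) (adv : adversary S),
    (forall rA rB, (4 * corruptions P adv x y rA rB <= (rounds P).+3)%N) /\
    \sum_(rA : RA) \sum_(rB : RB)
        pA rA * pB rB * (succeeds P adv x y rA rB)%:R <= 2^-1.
Proof.
pose m := (bob_rounds P (rounds P) %/ 2)%N.
have [v [world0|world1]] := exists_half_of_disjoint pA_ge0 pA_sum pB_ge0 pB_sum
  (E0 := fun a u v => succeeds P (forge_late P m y1 v) x0 y0 a u)
  (E1 := fun a u v => succeeds P (forge_early P m y0 v) x0 y1 a u)
  (fun a u v => forged_runs_disjoint y01).
- exists x0, y0, (forge_late P m y1 v); split => // rA rB.
  by have := corruptions_forge_late P x0 rA y0 rB y1 v m; rewrite /m; lia.
- exists x0, y1, (forge_early P m y0 v); split => // rA rB.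
  by have := corruptions_forge_early P x0 rA y0 v y1 rB m; rewrite /m; lia.
Qed.

Section SwapRoles.
Variables (X Y S : eqType) (RA RB : Type) (P : protocol X Y S RA RB).

Definition swap_protocol : protocol Y X S RB RA :=
  Protocol (rounds P) (fun i => ~~ speaker P i) (msgB P) (msgA P)
    (fun y r h => let p := outB P y r h in (p.2, p.1))
    (fun x r h => let p := outA P x r h in (p.2, p.1)).

Lemma sent_swap x y rA rB i h :
  sent swap_protocol y x rB rA i h = sent P x y rA rB i h.
Proof. by rewrite /sent /=; case: (speaker P i). Qed.

Lemma transcript_swap adv x y rA rB i :
  transcript swap_protocol adv y x rB rA i = transcript P adv x y rA rB i.
Proof. by elim: i => //= i ->; rewrite sent_swap. Qed.

Lemma corruptions_swap adv x y rA rB :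
  corruptions swap_protocol adv y x rB rA = corruptions P adv x y rA rB.
Proof. by apply: eq_bigr => i _; rewrite transcript_swap sent_swap. Qed.

Lemma succeeds_swap adv x y rA rB :
  succeeds swap_protocol adv y x rB rA = succeeds P adv x y rA rB.
Proof.
rewrite /succeeds /= transcript_swap.
case: (outA P x rA _) => a b; case: (outB P y rB _) => c d /=.
by rewrite !xpair_eqE andbC; congr (_ && _); apply: andbC.
Qed.

Lemma bob_rounds_swap :
  (bob_rounds swap_protocol (rounds P) + bob_rounds P (rounds P) = rounds P)%N.
Proof.
rewrite /bob_rounds -big_split /= -[X in _ = X]card_ord -sum1_card.
by apply: eq_bigr => i _; case: (speaker P i).
Qed.

End SwapRoles.

Theorem mainTheorem2
  (R : realFieldType) (X Y S : eqType) (RA RB : finType)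
  (pA : RA -> R) (pB : RB -> R)
  (pA_ge0 : forall r, 0 <= pA r) (pA_sum : \sum_(r : RA) pA r = 1)
  (pB_ge0 : forall r, 0 <= pB r) (pB_sum : \sum_(r : RB) pB r = 1)
  (P : protocol X Y S RA RB)
  (hX : exists x0 x1 : X, x0 != x1) (hY : exists y0 y1 : Y, y0 != y1) :
  exists (x : X) (y : Y) (adv : adversary S),
    (forall rA rB, (4 * corruptions P adv x y rA rB <= (rounds P).+3)%N) /\
    \sum_(rA : RA) \sum_(rB : RB)
        pA rA * pB rB * (succeeds P adv x y rA rB)%:R <= 2^-1.
Proof.
case: hX => x0 [x1 x01]; case: hY => y0 [y1 y01].
have [bob_minority|alice_minority] := leqP (2 * bob_rounds P (rounds P))%N (rounds P).
  exact: (exists_attack_of_bob_rounds_le_half pA_ge0 pA_sum pB_ge0 pB_sum x0 y01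
            bob_minority).
have swapped_minority :
    (2 * bob_rounds (swap_protocol P) (rounds (swap_protocol P))
      <= rounds (swap_protocol P))%N.
  by have := bob_rounds_swap P; rewrite /=; lia.
have [y [x [adv [corr succ]]]] := exists_attack_of_bob_rounds_le_half
  pB_ge0 pB_sum pA_ge0 pA_sum y0 x01 swapped_minority.
exists x, y, adv; split=> [rA rB|]; first by rewrite -corruptions_swap.
apply: le_trans succ; rewrite exchange_big /= le_eqVlt; apply/orP; left.
apply/eqP; apply: eq_bigr => rB _; apply: eq_bigr => rA _.
by rewrite succeeds_swap [pB rB * pA rA]mulrC.
Qed.
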